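(* Let $m\ge1$ and let $p\ge 2m-1$ be a prime. Let $0\le k\le\lfloor\frac{m+1}{2}\rfloor+1$ and let $n$ be a non-negative integer with $n<N_k$. Then $$\mathrm{ex}(n,m,p)\ge \nu_p(n!)-(k-1).$$
   Context: Partitions $\lambda=(\lambda_1\ge\dots\ge\lambda_r\ge0)$ may have zero parts; the degree sequence is $n_\lambda=(\lambda_r,\lambda_{r-1}+1,\dots,\lambda_1+r-1)=(n_{\lambda,1},\dots,n_{\lambda,r})$ and $\Delta(n_\lambda)=\prod_{i<j}(n_{\lambda,j}-n_{\lambda,i})$. $H(\lambda)=n_{\lambda,1}!\cdots n_{\lambda,r}!/\Delta(n_\lambda)$ (the product of hook lengths) and $F_\lambda=|\lambda|!/H(\lambda)$ is the dimension of the irreducible representation of the symmetric group $S_{|\lambda|}$ indexed by $\lambda$. $\nu_p$ is the $p$-adic valuation. Removing a $2$-hook means replacing an entry $a$ of $n_\lambda$ by $a-2\ge0$ with $a-2\notin n_\lambda$; removing $2$-hooks until impossible yields the $2$-core, a staircase $(m',m'-1,\dots,1)$ padded with zeros, of size $\binom{m'+1}2$. Define $\mathrm{ex}(n,m,p)=\min\{\nu_p(F_\lambda):\lambda\vdash n,\ \lambda\text{ has }2\text{-core of size }\binom{m+1}{2}\}$ (the minimum over the empty set is $+\infty$). For $0\le k\le\lfloor\frac{m+1}2\rfloor$ put $N_k=kp-k(2(m-k)+1)+\binom{m+1}{2}$, and put $N_{\lfloor\frac{m+1}2\rfloor+1}=(\lfloor\frac{m+1}2\rfloor+1)p$. *)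

From mathcomp Require Import all_boot all_order.
From mathcomp Require Import ssralg ssrnum ssrint.
Set Implicit Arguments. Unset Strict Implicit. Unset Printing Implicit Defensive.

(* A partition is represented by the seq [:: l_1; ...; l_r] of its parts,
   nonincreasing.  We allow zero parts (as in the paper). *)
Definition is_partition_of (n : nat) (l : seq nat) : bool :=
  sorted geq l && (sumn l == n).

(* degree sequence n_l = (l_r, l_{r-1}+1, ..., l_1 + r - 1) *)
Definition degseq (l : seq nat) : seq nat :=
  let r := size l in [seq nth 0 l (r - 1 - i) + i | i <- iota 0 r].

Definition vandermonde (s : seq nat) : nat :=
  \prod_(0 <= j < size s) \prod_(0 <= i < j) (nth 0 s j - nth 0 s i).

(* H(l) = n_1! ... n_r! / Delta(n_l)  (product of hook lengths) *)
Definition hookprod (l : seq nat) : nat :=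
  (\prod_(a <- degseq l) a`!) %/ vandermonde (degseq l).

Definition Fdim (l : seq nat) : nat := (sumn l)`! %/ hookprod l.

(* One 2-hook removal: replace the first entry a of s with 2 <= a and
   a - 2 \notin s by a - 2; None if no 2-hook can be removed. *)
Fixpoint remove_hook_aux (pre s0 : seq nat) (s : seq nat) : option (seq nat) :=
  match s with
  | [::] => None
  | a :: t => if (2 <= a) && (a - 2 \notin s0) then Some (pre ++ (a - 2) :: t)
              else remove_hook_aux (rcons pre a) s0 t
  end.
Definition remove_hook (s : seq nat) : option (seq nat) := remove_hook_aux [::] s s.

(* remove 2-hooks until impossible (fuel = sum of entries suffices, since each
   removal decreases the sum by 2) *)
Fixpoint remove_hooks (fuel : nat) (s : seq nat) : seq nat :=
  match fuel with
  | 0 => s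
  | f.+1 => if remove_hook s is Some s' then remove_hooks f s' else s
  end.

Definition core2_beta (l : seq nat) : seq nat :=
  remove_hooks (sumn (degseq l)) (degseq l).

Definition size_of_beta (s : seq nat) : nat := sumn s - 'C(size s, 2).

Definition core2_size (l : seq nat) : nat := size_of_beta (core2_beta l).

Fixpoint partsb (fuel n b : nat) : seq (seq nat) :=
  if n == 0 then [:: [::]] else
  match fuel with
  | 0 => [::]
  | f.+1 => flatten [seq [seq a :: l | l <- partsb f (n - a) a] | a <- iota 1 (minn n b)]
  end.

(* all partitions of n (without zero parts; zero parts do not change F_l nor
   the 2-core size) *)
Definition partitions (n : nat) : seq (seq nat) :=
  [seq l <- partsb n n n | is_partition_of n l].

(* minimum of a list, None = +infinity for the empty list *)
Definition omin (s : seq nat) : option nat :=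
  foldr (fun x o => Some (if o is Some y then minn x y else x)) None s.

(* ex(n,m,p) ; None stands for +infinity *)
Definition ex (n m p : nat) : option nat :=
  omin [seq logn p (Fdim l) | l <- partitions n & core2_size l == 'C(m.+1, 2)].

Definition oge (o : option nat) (x : int) : Prop :=
  if o is Some e then (x <= (Posz e))%R else True.

Definition Nk (m p k : nat) : int :=
  if k <= (m.+1)./2 then
    (Posz (k * p) - Posz (k * (2 * (m - k) + 1)) + Posz 'C(m.+1, 2))%R
  else Posz (((m.+1)./2).+1 * p).

From mathcomp Require Import all_boot all_order.
From mathcomp Require Import ssralg ssrnum ssrint.
From mathcomp Require Import zify.
Set Implicit Arguments. Unset Strict Implicit. Unset Printing Implicit Defensive.

(* A partition l of n with r parts is encoded by its beta-set
   X = degseq l, a set of r distinct naturals with sum n + C(r, 2).  A hook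
   of l is a pair (x, y) with x in X, y < x and y not in X, of length x - y.

   1. Sums of sets of distinct naturals: such a set with e even and c odd
      entries has sum >= parity_min e c = e (e - 1) + c^2, with equality for
      sets closed under x |-> x - 2.  Since removing 2-hooks preserves e and
      c and ends at such a closed set, |2-core| + C(r, 2) = parity_min e c.
   2. Hooks of length divisible by q: while there is one, some q-hook can be
      removed, and this destroys at most one of them; hence k of them can be
      removed whenever there are k, and their number is at most n / q.
   3. The hook product H(l) is the product of all hook lengths, so
      nu_p(H(l)) = sum_j #(hooks of length divisible by p^j); with step 2
      and Legendre's formula this gives H(l) | n!, hence
      nu_p(F_l) = nu_p(n!) - nu_p(H(l)).
   4. Let n < N_k.  At least k hook lengths divisible by p would allow to
      remove k p-hooks, and the bound of step 1 would give n >= N_k; so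
      there are fewer than k.  As N_k <= p^2, no hook length is divisible
      by p^2 (step 2), so nu_p(H(l)) is that number, hence at most k - 1. *)

Lemma bin2_double r : 2 * 'C(r, 2) = r * r.-1.
Proof.
elim: r => [//|r IH]; rewrite binS bin1 mulnDr IH; case: r {IH} => //= r; lia.
Qed.

Lemma mem_le_sumn (s : seq nat) x : x \in s -> x <= sumn s.
Proof. elim: s => //= a s IH; rewrite inE => /orP [/eqP ->|/IH]; lia. Qed.

Lemma sumn_path_ltn_ge b t : path ltn b t -> b.+1 * size t + 'C(size t, 2) <= sumn t.
Proof.
elim: t b => [|a t IH] b /=; first by rewrite muln0.
case/andP => ba /IH; rewrite binS bin1; nia.
Qed.

Lemma sumn_uniq_ge s : uniq s -> 'C(size s, 2) <= sumn s.
Proof.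
move=> us; have st : sorted ltn (sort leq s).
  by rewrite ltn_sorted_uniq_leq sort_uniq us (sort_sorted leq_total).
have ps : perm_eq (sort leq s) s by rewrite perm_sort.
rewrite -(perm_size ps) -(perm_sumn ps).
case: (sort leq s) st => [|a t] //= /sumn_path_ltn_ge; rewrite binS bin1; lia.
Qed.

Definition nodd (s : seq nat) : nat := count odd s.
Definition neven (s : seq nat) : nat := count (predC odd) s.

Lemma neven_nodd s : neven s + nodd s = size s.
Proof. by rewrite addnC count_predC. Qed.

(* The least sum of e distinct even and c distinct odd naturals:
   (0 + 2 + ... + 2(e - 1)) + (1 + 3 + ... + (2c - 1)). *)
Definition parity_min (e c : nat) : nat := e * e.-1 + c * c.

Lemma parity_minE e c : parity_min e c = 2 * 'C(e, 2) + (2 * 'C(c, 2) + c).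
Proof. by rewrite /parity_min !bin2_double; case: c => //= c; lia. Qed.

Lemma sumn_parity_class b s : all (fun x => odd x == b) s ->
  sumn s = 2 * sumn (map half s) + b * size s.
Proof.
elim: s => [|a s IH] /=; first lia.
move=> /andP [/eqP ha hs]; rewrite IH //.
have := odd_double_half a; rewrite ha -muln2; lia.
Qed.

Lemma uniq_map_half b s : all (fun x => odd x == b) s -> uniq s -> uniq (map half s).
Proof.
move=> /allP hall us; rewrite map_inj_in_uniq // => x y hx hy hxy.
by rewrite -(odd_double_half x) -(odd_double_half y) (eqP (hall x hx)) (eqP (hall y hy)) hxy.
Qed.

Lemma sumn_parity_class_ge b s : uniq s -> all (fun x => odd x == b) s ->
  2 * 'C(size s, 2) + b * size s <= sumn s.
Proof.
move=> us hall; rewrite (sumn_parity_class hall) leq_add2r leq_mul2l /=.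
by rewrite -(size_map half); apply/sumn_uniq_ge/(uniq_map_half hall).
Qed.

Lemma sumn_filterC (P : pred nat) s :
  sumn s = sumn (filter P s) + sumn (filter (predC P) s).
Proof. elim: s => //= a s ->; case: (P a) => /=; lia. Qed.

Lemma sumn_parity_split s : sumn s =
  sumn (filter (fun x => odd x == false) s) + sumn (filter (fun x => odd x == true) s).
Proof.
rewrite (sumn_filterC (fun x => odd x == false)); congr (_ + sumn _).
by apply: eq_filter => x /=; case: (odd x).
Qed.

Lemma size_parity_filter s :
  size (filter (fun x => odd x == false) s) = neven s /\
  size (filter (fun x => odd x == true) s) = nodd s.
Proof.
rewrite !size_filter; split; apply: eq_count => x /=; by case: (odd x).
Qed.

Lemma sumn_uniq_ge_parity_min s : uniq s -> parity_min (neven s) (nodd s) <= sumn s.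
Proof.
move=> us; have [se so] := size_parity_filter s.
have he := sumn_parity_class_ge (filter_uniq _ us) (filter_all (fun x => odd x == false) s).
have ho := sumn_parity_class_ge (filter_uniq _ us) (filter_all (fun x => odd x == true) s).
rewrite se mul0n addn0 in he; rewrite so mul1n in ho.
by rewrite parity_minE sumn_parity_split leq_add.
Qed.

(* A set of naturals from which no 2-hook can be removed: this characterises
   the beta-sets of 2-cores. *)
Definition closed2 (s : seq nat) : Prop := forall x, x \in s -> 2 <= x -> x - 2 \in s.

Lemma closed2_down s x t : closed2 s -> x \in s -> 2 * t <= x -> x - 2 * t \in s.
Proof.
move=> hc hx; elim: t => [|t IH] ht; first by rewrite muln0 subn0.
have -> : x - 2 * t.+1 = x - 2 * t - 2 by lia.
apply: hc; [apply: IH | ]; lia.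
Qed.

(* In a closed set, x comes with x - 2, x - 4, ..., so x / 2 < size s. *)
Lemma half_lt_size s x : uniq s -> closed2 s -> x \in s -> x./2 < size s.
Proof.
move=> us hc hx; pose T := [seq x - 2 * t | t <- iota 0 (x./2).+1].
have uT : uniq T.
  rewrite map_inj_in_uniq ?iota_uniq // => a b; rewrite !mem_iota /= !add0n.
  have := odd_double_half x; rewrite !ltnS -!muln2; lia.
have sub : {subset T <= s}.
  move=> y /mapP [t]; rewrite mem_iota add0n ltnS => /andP [_ ht] ->.
  apply: closed2_down => //; have := odd_double_half x; rewrite -muln2; lia.
by have := uniq_leq_size uT sub; rewrite size_map size_iota.
Qed.

Lemma odd_sub2 x : 2 <= x -> odd (x - 2) = odd x.
Proof. by case: x => [|[|x]] //= _; rewrite !subSS subn0 negbK. Qed.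

Lemma closed2_parity_filter (b : bool) s :
  closed2 s -> closed2 (filter (fun x => odd x == b) s).
Proof.
by move=> hc x; rewrite !mem_filter => /andP [px xs] h2; rewrite odd_sub2 // px hc.
Qed.

(* In a closed parity class the halves are exactly 0, 1, ..., r - 1. *)
Lemma sumn_parity_class_closed2 b s : uniq s -> all (fun x => odd x == b) s ->
  closed2 s -> sumn s = 2 * 'C(size s, 2) + b * size s.
Proof.
move=> us hall hc; rewrite (sumn_parity_class hall); congr (2 * _ + _).
have uh := uniq_map_half hall us.
have sub : {subset map half s <= iota 0 (size s)}.
  by move=> y /mapP [x hx ->]; rewrite mem_iota add0n; exact: half_lt_size.
have hsz : size (iota 0 (size s)) <= size (map half s) by rewrite size_iota size_map.
have [_ eqm] := uniq_min_size uh sub hsz.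
rewrite (perm_sumn (uniq_perm uh (iota_uniq 0 _) eqm)) sumnE -bin2_sum.
by rewrite /index_iota subn0.
Qed.

Lemma sumn_closed2 s : uniq s -> closed2 s -> sumn s = parity_min (neven s) (nodd s).
Proof.
move=> us hc; have [se so] := size_parity_filter s.
have he := sumn_parity_class_closed2 (filter_uniq _ us) (filter_all (fun x => odd x == false) s)
  (@closed2_parity_filter false s hc).
have ho := sumn_parity_class_closed2 (filter_uniq _ us) (filter_all (fun x => odd x == true) s)
  (@closed2_parity_filter true s hc).
rewrite se mul0n addn0 in he; rewrite so mul1n in ho.
by rewrite parity_minE sumn_parity_split he ho.
Qed.

Lemma remove_hook_auxP pre s0 s s' : remove_hook_aux pre s0 s = Some s' ->
  exists pre' a t, [/\ pre ++ s = pre' ++ a :: t, s' = pre' ++ (a - 2) :: t,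
     2 <= a & a - 2 \notin s0].
Proof.
elim: s pre => //= a t IH pre.
case: ifP => [/andP [h1 h2] [<-] | _ /IH [pre' [a' [t' [e1 e2 e3 e4]]]]].
  by exists pre, a, t.
by exists pre', a', t'; split => //; rewrite -e1 cat_rcons.
Qed.

Lemma remove_hook_aux_None pre s0 s : remove_hook_aux pre s0 s = None ->
  forall a, a \in s -> 2 <= a -> a - 2 \in s0.
Proof.
elim: s pre => //= a t IH pre.
case: ifP => // /negbT; rewrite negb_and negbK => h /IH H x; rewrite inE.
by case/orP => [/eqP -> | /H //]; case/orP: h => [/negbTE -> |].
Qed.

Lemma remove_hook_Some s s' : uniq s -> remove_hook s = Some s' ->
  [/\ uniq s', size s' = size s, sumn s' + 2 = sumn s & nodd s' = nodd s].
Proof.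
move=> us /remove_hook_auxP [pre [a [t [/= e1 -> h2 h3]]]].
move: us h3; rewrite e1 /nodd !cat_uniq !size_cat !sumn_cat !count_cat /=.
move=> /and4P [u1 /norP [na u2] u3 u4].
rewrite mem_cat inE !negb_or => /and3P [nap _ nat].
split; [by rewrite u1 u4 nat (negbTE nap) (negbTE u2) | by [] | lia | by rewrite odd_sub2].
Qed.

Lemma remove_hook_None s : remove_hook s = None -> closed2 s.
Proof. by move=> /remove_hook_aux_None H x xs h; exact: H. Qed.

Lemma remove_hooksP fuel s : uniq s -> sumn s <= fuel ->
  let R := remove_hooks fuel s in
  [/\ uniq R, size R = size s, nodd R = nodd s & closed2 R].
Proof.
elim: fuel s => [|f IH] s us hs /=.
  split=> // x xs h2; have := mem_le_sumn xs; lia.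
case e: (remove_hook s) => [s'|]; last by split=> //; apply: remove_hook_None.
have [u' sz' sm' c'] := remove_hook_Some us e.
by have [] := IH s' u' ltac:(lia); rewrite sz' c'.
Qed.

Lemma size_degseq l : size (degseq l) = size l.
Proof. by rewrite /degseq size_map size_iota. Qed.

Lemma degseq_sorted l : sorted geq l -> sorted ltn (degseq l).
Proof.
move=> hs; rewrite /degseq.
apply: (homo_sorted_in (P := fun i => i < size l)); last first.
- exact: iota_ltn_sorted.
- by apply/allP => i; rewrite mem_iota add0n.
move=> i j hi hj hij /=.
have : nth 0 l (size l - 1 - i) <= nth 0 l (size l - 1 - j).
  have gt : transitive geq by move=> a b c h1 h2; exact: leq_trans h2 h1.
  apply: (@sorted_leq_nth _ geq gt (fun x => leqnn x) 0 l hs); rewrite ?inE /=; lia.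
lia.
Qed.

Lemma degseq_uniq l : sorted geq l -> uniq (degseq l).
Proof. by move=> /degseq_sorted; apply: sorted_uniq; [exact: ltn_trans | exact: ltnn]. Qed.

Lemma sumn_degseq l : sumn (degseq l) = sumn l + 'C(size l, 2).
Proof.
have -> : 'C(size l, 2) = sumn (iota 0 (size l)).
  by rewrite sumnE -bin2_sum /index_iota subn0.
have -> : sumn l = sumn [seq nth 0 l (size l - 1 - i) | i <- iota 0 (size l)].
  rewrite -sumn_rev; congr sumn.
  apply: (@eq_from_nth _ 0); first by rewrite size_rev size_map size_iota.
  move=> i; rewrite size_rev => hi; rewrite nth_rev // (nth_map 0) ?size_iota // nth_iota //.
  congr nth; lia.
by rewrite /degseq; elim: (iota 0 (size l)) => //= a s ->; lia.
Qed.

(* The size of the 2-core is read off from the numbers of even and odd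
   entries of the beta-set: removing 2-hooks preserves both numbers and ends
   at a closed set, whose sum is given by sumn_closed2. *)
Lemma core2_size_parity_min l : sorted geq l ->
  core2_size l + 'C(size l, 2) = parity_min (neven (degseq l)) (nodd (degseq l)).
Proof.
move=> hs; set X := degseq l.
have [uR szR cR clR] := remove_hooksP (degseq_uniq hs) (leqnn (sumn X)).
rewrite /core2_size /core2_beta /size_of_beta -/X.
set R := remove_hooks _ _ in uR szR cR clR *; rewrite -/X in szR cR.
have eR : neven R = neven X by have := neven_nodd R; rewrite szR cR -(neven_nodd X); lia.
have := sumn_uniq_ge uR; rewrite sumn_closed2 // szR size_degseq eR cR; lia.
Qed.

(* qgaps q X x counts the hooks (x, y) at the bead x whose length x - y is
   divisible by q; qhooks q X counts all hooks of length divisible by q. *)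
Definition qgaps (q : nat) (X : seq nat) (x : nat) : nat :=
  count (fun y => (y \notin X) && (q %| x - y)) (iota 0 x).

Definition qhooks (q : nat) (X : seq nat) : nat := sumn [seq qgaps q X x | x <- X].

(* Walking down from x by steps of q towards a gap y reaches an x0 in X with
   x0 - q not in X: a removable q-hook. *)
Lemma removable_qhook_below q (X : seq nat) x y : 0 < q -> x \in X -> y < x ->
  y \notin X -> q %| x - y -> exists2 x0, x0 \in X & (q <= x0) && (x0 - q \notin X).
Proof.
move=> q0 + + yX; have [N hN] : exists N, x - y <= N by exists (x - y).
elim: N x hN => [|N IH] x hN xX yx dq; first lia.
have hq : q <= x - y by apply: dvdn_leq => //; lia.
case: (boolP (x - q \in X)) => h; last by exists x => //; rewrite h andbT; lia.
have ne : x - q != y by apply: contraNneq yX => <-.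
apply: (IH (x - q)) => //; [lia | lia |].
have -> : x - q - y = (x - y) - q by lia.
by rewrite dvdn_sub.
Qed.

Lemma removable_qhook q (X : seq nat) : 0 < q -> 0 < qhooks q X ->
  exists2 x0, x0 \in X & (q <= x0) && (x0 - q \notin X).
Proof.
move=> q0; rewrite /qhooks sumnE big_map lt0n sum_nat_seq_neq0 => /hasP [x xX].
rewrite /= -lt0n /qgaps -has_count => /hasP [y].
rewrite mem_iota add0n => /andP [_ yx] /andP [yX dq].
exact: (removable_qhook_below q0 xX yx yX dq).
Qed.

Lemma count_split (a b : pred nat) s :
  count a s = count (predI a b) s + count (predI a (predC b)) s.
Proof. by elim: s => //= x s ->; case: (a x); case: (b x) => /=; lia. Qed.

Lemma count_le1 u s (P : pred nat) : uniq s ->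
  (forall y, y \in s -> P y -> y = u) -> count P s <= 1.
Proof.
move=> us hP; apply: (@leq_trans (count (pred1 u) s)).
  rewrite (@eq_in_count _ P (fun y => (y \in s) && P y)); last by move=> y ->.
  by apply: sub_count => y /andP [ys /(hP _ ys) ->]; rewrite /= eqxx.
by rewrite count_uniq_mem //; case: (u \in s).
Qed.

Definition remove_qhook (q : nat) (X : seq nat) (x0 : nat) : seq nat :=
  (x0 - q) :: rem x0 X.

Section RemoveQhook.
Variables (q : nat) (X : seq nat) (x0 : nat).
Hypotheses (q0 : 0 < q) (uX : uniq X) (x0X : x0 \in X) (qx0 : q <= x0)
  (nX : x0 - q \notin X).
Let X' := remove_qhook q X x0.

Lemma mem_remove_qhook y : (y \in X') = (y == x0 - q) || ((y != x0) && (y \in X)).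
Proof. by rewrite inE (mem_rem_uniq _ uX) inE. Qed.

Lemma remove_qhookP : [/\ uniq X', size X' = size X, sumn X' + q = sumn X &
  nodd X' <= (nodd X).+1 /\ nodd X <= (nodd X').+1].
Proof.
have hp := perm_to_rem x0X.
have hc : nodd X = odd x0 + nodd (rem x0 X) by rewrite /nodd (permP hp).
split.
- by rewrite /= rem_uniq // andbT; apply: contra nX => /mem_rem.
- by rewrite (perm_size hp).
- rewrite (perm_sumn hp) /=; lia.
- by move: hc; rewrite /nodd /=; case: (odd _); case: (odd _) => /=; lia.
Qed.

(* The moved bead keeps its q-gaps below x0 - q, and has at most one in between. *)
Lemma qgaps_moved : qgaps q X x0 <= (qgaps q X' (x0 - q)).+1.
Proof.
rewrite /qgaps; set u := x0 - q.
have -> : x0 = u + q by rewrite /u; lia.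
rewrite iotaD count_cat add0n -addn1; apply: leq_add.
  apply/eq_leq/eq_in_count => y; rewrite mem_iota add0n => /andP [_ yu].
  have -> : u + q - y = q + (u - y) by lia.
  rewrite dvdn_addr // mem_remove_qhook.
  have -> : (y == u) = false by apply/negbTE; rewrite neq_ltn yu.
  by have -> : (y != x0) = true by apply/eqP; lia.
apply: (count_le1 (u := u) (iota_uniq _ _)) => y.
rewrite mem_iota => /andP [h1 h2] /andP [_ dq].
have : q <= u + q - y by apply: dvdn_leq => //; lia.
lia.
Qed.

(* Another bead z loses at most the gap x0 - q, and then gains the gap x0. *)
Lemma qgaps_other z : z \in X -> z != x0 -> qgaps q X z <= qgaps q X' z.
Proof.
move=> zX zx0; rewrite /qgaps.
set P := (fun y => _); set P' := (fun y => _).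
rewrite (count_split P P') (count_split P' P).
rewrite [count (predI P' P) _](@eq_count _ _ (predI P P')); last first.
  by move=> y /=; rewrite andbC.
rewrite leq_add2l.
have lost : count (predI P (predC P')) (iota 0 z) <= (x0 - q < z) && (q %| z - (x0 - q)).
  case: (boolP ((x0 - q < z) && _)) => hc.
    apply: (count_le1 (u := x0 - q) (iota_uniq _ _)) => y _ /andP [] /andP [yX dq] /=.
    by rewrite /P' mem_remove_qhook negb_and negbK dq orbF (negbTE yX) andbF orbF => /eqP.
  rewrite leqn0 -(negbK (_ == 0)) -lt0n -has_count; apply/hasP => [[y]].
  rewrite mem_iota add0n => /andP [_ yz] /andP [] /andP [yX dq] /=.
  rewrite /P' mem_remove_qhook negb_and negbK dq orbF (negbTE yX) andbF orbF => /eqP e.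
  by move: hc; rewrite -e yz dq.
apply: (leq_trans lost); case/boolP: ((x0 - q < z) && _) => // /andP [uz dq].
have hq : q <= z - (x0 - q) by apply: dvdn_leq => //; lia.
have zx : x0 < z by move: zx0; rewrite neq_ltn => /orP [|//]; lia.
rewrite -has_count; apply/hasP; exists x0; first by rewrite mem_iota; lia.
rewrite /= /P' /P mem_remove_qhook x0X eqxx /= andbT orbF.
have -> : (x0 == x0 - q) = false by apply/negbTE/eqP; lia.
have -> : z - x0 = (z - (x0 - q)) - q by lia.
by rewrite dvdn_sub.
Qed.

Lemma qhooks_remove_qhook : qhooks q X <= (qhooks q X').+1.
Proof.
have hp := perm_to_rem x0X.
rewrite /qhooks (perm_sumn (perm_map _ hp)) /= -addSn.
apply: leq_add; first exact: qgaps_moved.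
rewrite !sumnE !big_map !big_seq; apply: leq_sum => z zr; apply: qgaps_other.
- exact: mem_rem zr.
- by apply: contraTneq zr => ->; rewrite mem_rem_uniqF.
Qed.

End RemoveQhook.

Lemma remove_qhooks q k X : 0 < q -> uniq X -> k <= qhooks q X ->
  exists X', [/\ uniq X', size X' = size X, sumn X' + k * q = sumn X,
    nodd X' <= nodd X + k & nodd X <= nodd X' + k].
Proof.
move=> q0; elim: k X => [|k IH] X uX hk; first by exists X; rewrite !addn0.
have [x0 x0X /andP [qx0 nX]] := removable_qhook q0 (leq_trans (ltn0Sn k) hk).
have [u1 s1 e1 [c1 c2]] := remove_qhookP q0 uX x0X qx0 nX.
have hk1 := qhooks_remove_qhook q0 uX x0X qx0 nX.
have [X2 [u2 s2 e2 d1 d2]] := IH _ u1 ltac:(lia).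
by exists X2; split => //; [rewrite s2 s1 | lia | lia | lia].
Qed.

(* Removing all of them leaves a set of distinct naturals, so
   q * qhooks q X <= sumn X - C(r, 2), which is the size of the partition. *)
Lemma qhooks_le q X : 0 < q -> uniq X -> q * qhooks q X + 'C(size X, 2) <= sumn X.
Proof.
move=> q0 uX; have [X' [u' s' e' _ _]] := remove_qhooks q0 uX (leqnn (qhooks q X)).
have := sumn_uniq_ge u'; rewrite s' -e'; lia.
Qed.

Lemma qhooks_le_div q X n : 0 < q -> uniq X -> sumn X = n + 'C(size X, 2) ->
  qhooks q X <= n %/ q.
Proof. by move=> q0 uX hs; rewrite leq_divRL //; have := qhooks_le q0 uX; lia. Qed.

Definition beta_hookprod (X : seq nat) : nat :=
  \prod_(x <- X) \prod_(y <- iota 0 x | y \notin X) (x - y).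

Lemma fact_iota x : x`! = \prod_(y <- iota 0 x) (x - y).
Proof.
elim: x => [|x IH]; first by rewrite big_nil.
have -> : iota 0 x.+1 = 0 :: map succn (iota 0 x).
  by rewrite /= -(addn0 1) iotaDl; congr (_ :: _); apply: eq_map => y; rewrite add1n.
by rewrite factS big_cons big_map subn0 IH.
Qed.

Section SortedBetaSet.
Variable X : seq nat.
Hypothesis sX : sorted ltn X.

Lemma mem_take_sorted j y : j < size X ->
  (y \in take j X) = (y \in X) && (y < nth 0 X j).
Proof.
move=> hj; case yX: (y \in X); last by apply: contraFF yX => /mem_take.
have iy : index y X < size X by rewrite index_mem.
have sX' : sorted leq X by move: sX; rewrite ltn_sorted_uniq_leq => /andP [].
rewrite (in_take j yX) /= -{2}(nth_index 0 yX).
apply/idP/idP => h.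
  by apply: (sorted_ltn_nth ltn_trans 0 sX).
rewrite ltnNge; apply: contraTN h => h; rewrite -leqNgt.
exact: (sorted_leq_nth leq_trans leqnn 0 sX').
Qed.

Lemma filter_iota_sorted j : j < size X ->
  filter (mem X) (iota 0 (nth 0 X j)) = take j X.
Proof.
move=> hj; apply: (irr_sorted_eq ltn_trans ltnn).
- exact: sorted_filter ltn_trans _ _ (iota_ltn_sorted 0 _).
- exact: take_sorted.
by move=> y; rewrite mem_filter mem_iota add0n mem_take_sorted // andbC.
Qed.

(* Splitting each x! according to y in X or not gives the hook length formula
   prod_x x! = Delta(X) * H(X). *)
Lemma prod_fact_beta : \prod_(x <- X) x`! = vandermonde X * beta_hookprod X.
Proof.
rewrite /vandermonde /beta_hookprod (big_nth 0 (r := X) _ (fun a => a`!)).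
rewrite (big_nth 0 (r := X) _ (fun x => \prod_(y <- iota 0 x | y \notin X) (x - y))).
rewrite -big_split /= !big_nat; apply: eq_bigr => j /andP [_ hj].
rewrite fact_iota (bigID (mem X)) /=; congr (_ * _).
rewrite -big_filter filter_iota_sorted // (big_nth 0) size_take_min (minn_idPl (ltnW hj)).
by rewrite !big_nat; apply: eq_bigr => i /andP [_ hi]; rewrite nth_take.
Qed.

Lemma vandermonde_gt0 : 0 < vandermonde X.
Proof.
rewrite /vandermonde big_seq; apply: prodn_cond_gt0 => j.
rewrite mem_index_iota => /andP [_ hj].
rewrite big_seq; apply: prodn_cond_gt0 => i; rewrite mem_index_iota => /andP [_ hi].
by rewrite subn_gt0; apply: (sorted_ltn_nth ltn_trans 0 sX); rewrite ?inE //; lia.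
Qed.

End SortedBetaSet.

Lemma hookprodE l : sorted geq l -> hookprod l = beta_hookprod (degseq l).
Proof.
move=> /degseq_sorted sX.
by rewrite /hookprod prod_fact_beta // mulKn // vandermonde_gt0.
Qed.

Lemma logn_prod p (r : seq nat) (P : pred nat) (F : nat -> nat) :
  (forall i, i \in r -> P i -> 0 < F i) ->
  logn p (\prod_(i <- r | P i) F i) = \sum_(i <- r | P i) logn p (F i).
Proof.
elim: r => [|a r IH] h; first by rewrite !big_nil logn1.
have h' : forall i, i \in r -> P i -> 0 < F i by move=> i ir; apply: h; rewrite inE ir orbT.
rewrite !big_cons; case: ifP => Pa; last exact: IH.
rewrite lognM ?IH //; first by apply: h; rewrite ?inE ?eqxx.
by rewrite big_seq_cond; apply: prodn_cond_gt0 => i /andP [ir Pi]; exact: h'.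
Qed.

(* logn p t counts the j >= 1 with p ^ j | t; all of them satisfy j < t <= J. *)
Lemma logn_sum_dvdn p t J : prime p -> 0 < t -> t <= J ->
  logn p t = \sum_(1 <= j < J.+1) (p ^ j %| t).
Proof.
move=> pp t0 tJ; have p1 : 1 < p := prime_gt1 pp.
rewrite logn_count_dvd // (@big_cat_nat _ _ _ t 1 J.+1) //=; last lia.
rewrite [X in _ = _ + X]big1_seq ?addn0 // => j /andP [_].
rewrite mem_index_iota => /andP [tj _]; case: (boolP (p ^ j %| t)) => // /(dvdn_leq t0).
by have := ltn_expl t p1; have := leq_pexp2l (ltnW p1) tj; lia.
Qed.

Lemma hooklengths_gt0 (X : seq nat) x : 0 < \prod_(y <- iota 0 x | y \notin X) (x - y).
Proof.
rewrite big_seq_cond; apply: prodn_cond_gt0 => y.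
by rewrite mem_iota => /andP [/andP [_ yx] _]; rewrite subn_gt0.
Qed.

Lemma beta_hookprod_gt0 X : 0 < beta_hookprod X.
Proof. exact/prodn_gt0/hooklengths_gt0. Qed.

Lemma logn_hooklengths p (X : seq nat) x J : prime p -> x <= J ->
  logn p (\prod_(y <- iota 0 x | y \notin X) (x - y)) =
    \sum_(1 <= j < J.+1) qgaps (p ^ j) X x.
Proof.
move=> pp xJ; rewrite logn_prod; last by move=> y; rewrite mem_iota subn_gt0 => /andP [_ ->].
rewrite [LHS]big_seq_cond [LHS](eq_bigr (fun y => \sum_(1 <= j < J.+1) (p ^ j %| x - y))).
  rewrite -big_seq_cond exchange_big /=; apply: eq_bigr => j _.
  by rewrite /qgaps -sum1_count big_mkcondr; apply: eq_bigr => y _; case: (_ %| _).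
move=> y /andP [+ _]; rewrite mem_iota => /andP [_ yx].
by apply: logn_sum_dvdn; rewrite ?subn_gt0 //; lia.
Qed.

Lemma logn_beta_hookprod p X J : prime p -> (forall x, x \in X -> x <= J) ->
  logn p (beta_hookprod X) = \sum_(1 <= j < J.+1) qhooks (p ^ j) X.
Proof.
move=> pp hJ; rewrite logn_prod; last by move=> x _ _; apply: hooklengths_gt0.
rewrite (eq_big_seq _ (fun x xX => logn_hooklengths X pp (hJ x xX))) exchange_big /=.
by apply: eq_bigr => j _; rewrite /qhooks sumnE big_map.
Qed.

(* Since qhooks (p ^ j) X <= n %/ p ^ j, Legendre's formula gives H(X) | n!. *)
Lemma beta_hookprod_dvd_fact X n : uniq X -> sumn X = n + 'C(size X, 2) ->
  beta_hookprod X %| n`!.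
Proof.
move=> uX hs; apply/(dvdn_partP _ (beta_hookprod_gt0 X)) => l.
rewrite mem_primes => /and3P [pl _ _].
rewrite p_part pfactor_dvdn ?fact_gt0 // (logn_beta_hookprod (J := sumn X) pl); last first.
  by move=> x; apply: mem_le_sumn.
rewrite logn_fact //; have l1 : 1 < l := prime_gt1 pl.
apply: (@leq_trans (\sum_(1 <= j < (sumn X).+1) n %/ l ^ j)).
  by apply: leq_sum => j _; apply: qhooks_le_div => //; rewrite expn_gt0; lia.
rewrite (@big_cat_nat _ _ _ n.+1 1 (sumn X).+1) //= ?ltnS; last lia.
rewrite [X in _ + X <= _]big1_seq ?addn0 // => j /andP [_].
rewrite mem_index_iota => /andP [nj _]; apply: divn_small.
by have := ltn_expl n l1; have := leq_pexp2l (ltnW l1) (ltnW nj); lia.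
Qed.

(* When n < p ^ 2 no hook length is divisible by p ^ 2, so nu_p(H(X)) is
   the number of hooks of length divisible by p. *)
Lemma logn_beta_hookprod_small p X n : prime p -> uniq X ->
  sumn X = n + 'C(size X, 2) -> n < p ^ 2 -> logn p (beta_hookprod X) = qhooks p X.
Proof.
move=> pp uX hs np; have p0 : 0 < p := prime_gt0 pp.
rewrite (logn_beta_hookprod (J := (sumn X).+1) pp); last by move=> x /mem_le_sumn; lia.
rewrite big_ltn // expn1 big1_seq ?addn0 // => j /andP [_].
rewrite mem_index_iota => /andP [j2 _]; apply/eqP; rewrite -leqn0.
apply: (leq_trans (qhooks_le_div _ uX hs)); first by rewrite expn_gt0 p0.
rewrite leqn0 divn_small //; apply: (leq_trans np); apply: leq_pexp2l => //.
Qed.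

Section NkArithmetic.
Import GRing.Theory Num.Theory.
Local Open Scope ring_scope.

Lemma bin2_double_int (r : nat) : 2 * ('C(r, 2))%:Z = r%:Z * (r%:Z - 1).
Proof. by have := bin2_double r; case: r => [|r] //= h; nia. Qed.

Lemma pronic_mono (a b : int) : -1 <= a -> a <= b -> a * (a + 1) <= b * (b + 1).
Proof.
move=> ha hab; suff : 0 <= (b - a) * (b + a + 1) by nia.
case: (lerP 0 a) => h; first by apply: mulr_ge0; lia.
have -> : a = -1 by lia.
case: (lerP 0 b) => hb; first by apply: mulr_ge0; lia.
by have -> : b = -1 by lia.
Qed.

Lemma parity_min_balance (e c : nat) :
  2 * (parity_min e c)%:Z =
    (e + c)%:Z * ((e + c)%:Z - 1) + (c%:Z - e%:Z) * (c%:Z - e%:Z + 1).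
Proof. rewrite /parity_min; case: e => [|e] /=; nia. Qed.

(* The balance of a 2-core of size C(m + 1, 2) is m or -m-1; a balance d'
   within 2k of it, with 2k <= m + 1, has d'(d' + 1) >= (m - 2k)(m - 2k + 1). *)
Lemma balance_shift (m k : nat) (d d' : int) : (2 * k <= m + 1)%N ->
  m%:Z * (m%:Z + 1) = d * (d + 1) -> d' - d <= 2 * k%:Z -> d - d' <= 2 * k%:Z ->
  (m%:Z - 2 * k%:Z) * (m%:Z - 2 * k%:Z + 1) <= d' * (d' + 1).
Proof.
move=> hk hm h1 h2.
have /eqP : (d - m%:Z) * (d + m%:Z + 1) = 0 by lia.
rewrite mulf_eq0 => /orP [] /eqP e; first by apply: pronic_mono; lia.
have -> : d' * (d' + 1) = (- d' - 1) * (- d' - 1 + 1) by lia.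
apply: pronic_mono; lia.
Qed.

Lemma Nk_double m p k : (k <= (m.+1)./2)%N ->
  2 * Nk m p k = 2 * (k * p)%:Z + (m%:Z - 2 * k%:Z) * (m%:Z - 2 * k%:Z + 1).
Proof.
move=> hk; rewrite /Nk hk; have := bin2_double m.+1; move: ('C(_, 2)) => C /= hC.
nia.
Qed.

Lemma Nk_last m p : Nk m p ((m.+1)./2).+1 = (((m.+1)./2).+1 * p)%:Z.
Proof. by rewrite /Nk ltnn. Qed.

Lemma Nk_le_sq m p k : (2 <= p)%N -> (1 <= m)%N -> (2 * m - 1 <= p)%N -> (1 <= k)%N ->
  (k <= ((m.+1)./2).+1)%N -> Nk m p k <= (p ^ 2)%:Z.
Proof.
move=> p2 m1 hp k1; rewrite leq_eqVlt ltnS => /orP [/eqP -> | hk].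
  rewrite Nk_last lez_nat expnS expn1 leq_mul2r; lia.
have := Nk_double p hk; nia.
Qed.

End NkArithmetic.

(* Remove k hooks of length p: the sum drops by kp, and the balance
   d = #odd - #even, which satisfies d (d + 1) = m (m + 1), moves by at most
   2k; the remaining beta-set X' has sum at least parity_min of its parity
   counts, which by parity_min_balance and balance_shift is what N_k needs. *)
Lemma Nk_le_of_qhooks m p k n X : 0 < p -> uniq X -> sumn X = n + 'C(size X, 2) ->
  parity_min (neven X) (nodd X) = 'C(m.+1, 2) + 'C(size X, 2) ->
  k <= ((m.+1)./2).+1 -> k <= qhooks p X -> (Nk m p k <= Posz n)%R.
Proof.
move=> p0 uX sumX coreX hk hq.
have [X' [uX' sizeX' sumX' odd1 odd2]] := remove_qhooks p0 uX hq.
have [hk2 | hk2] := leqP k (m.+1)./2; last first.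
  have ek : ((m.+1)./2).+1 = k by lia.
  by rewrite -ek Nk_last ek lez_nat; have := sumn_uniq_ge uX'; rewrite sizeX'; lia.
have minX' := sumn_uniq_ge_parity_min uX'.
have bal := parity_min_balance (neven X) (nodd X).
have bal' := parity_min_balance (neven X') (nodd X').
have sz := neven_nodd X; have sz' := neven_nodd X'.
have C2r := bin2_double_int (size X); have C2m := bin2_double_int m.+1.
have twoNk := Nk_double p hk2.
rewrite sz coreX in bal; rewrite sz' sizeX' in bal'; rewrite sizeX' in sz'.
set r := size X in C2r sumX bal bal' sz sz' minX'.
set d := ((nodd X)%:Z - (neven X)%:Z)%R in bal.
set d' := ((nodd X')%:Z - (neven X')%:Z)%R in bal'.
have core_d : (m%:Z * (m%:Z + 1) = d * (d + 1))%R by lia.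
have hk2' : 2 * k <= m + 1 by lia.
have := balance_shift (d' := d') hk2' core_d; lia.
Qed.

(* For a partition l of n with 2-core of size C(m + 1, 2), n < N_k forces
   nu_p(H(l)) < k: there are fewer than k hooks of length divisible by p,
   and n < N_k <= p ^ 2 leaves no hook of length divisible by p ^ 2. *)
Lemma logn_hookprod_lt m p k l : prime p -> 1 <= m -> 2 * m - 1 <= p ->
  k <= ((m.+1)./2).+1 -> sorted geq l -> core2_size l = 'C(m.+1, 2) ->
  (Posz (sumn l) < Nk m p k)%R -> logn p (hookprod l) < k.
Proof.
move=> pp m1 hp hk hs core_l hN.
have uX := degseq_uniq hs.
have sumX : sumn (degseq l) = sumn l + 'C(size (degseq l), 2).
  by rewrite sumn_degseq size_degseq.
have coreX : parity_min (neven (degseq l)) (nodd (degseq l)) =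
    'C(m.+1, 2) + 'C(size (degseq l), 2).
  by rewrite -core2_size_parity_min // core_l size_degseq.
have few_hooks : qhooks p (degseq l) < k.
  rewrite ltnNge; apply: contraTN hN => hq.
  by rewrite -Order.TotalTheory.leNgt (Nk_le_of_qhooks _ uX sumX coreX hk hq) ?prime_gt0.
have small : sumn l < p ^ 2.
  have := Nk_le_sq (prime_gt1 pp) m1 hp (leq_ltn_trans (leq0n _) few_hooks) hk.
  by rewrite -lez_nat; move: hN; apply: Order.POrderTheory.lt_le_trans.
by rewrite hookprodE // (logn_beta_hookprod_small pp uX sumX small).
Qed.

Lemma oge_omin (s : seq nat) (x : int) :
  (forall e, e \in s -> (x <= Posz e)%R) -> oge (omin s) x.
Proof.
elim: s => //= a s IH h; have := h a (mem_head _ _).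
have /IH : forall e, e \in s -> (x <= Posz e)%R by move=> e es; apply: h; rewrite inE es orbT.
by case: (omin s) => //= y; lia.
Qed.

Theorem mainTheorem8 (m p k n : nat) :
  1 <= m -> prime p -> 2 * m - 1 <= p ->
  k <= ((m.+1)./2).+1 ->
  (Posz n < Nk m p k)%R ->
  oge (ex n m p) (Posz (logn p n`!) - (Posz k - 1))%R.
Proof.
move=> m1 pp hp hk hN; apply: oge_omin => e /mapP [l].
rewrite !mem_filter => /andP [/eqP core_l /andP [/andP [hs /eqP sum_l] _]] {e}->.
have hdvd : hookprod l %| n`!.
  rewrite hookprodE // -sum_l; apply: beta_hookprod_dvd_fact (degseq_uniq hs) _.
  by rewrite sumn_degseq size_degseq.
have hlt := logn_hookprod_lt pp m1 hp hk hs core_l ltac:(by rewrite sum_l).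
have hle := dvdn_leq_log p (fact_gt0 n) hdvd.
by rewrite /Fdim sum_l logn_div //; lia.
Qed.
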